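(* Let $R$ be a hyperring. The topological space $X=\operatorname{Spec}R$ (with the Zariski topology) is disconnected if and only if $R$ has an element $e$ with $e^2=e$ and $e\notin\{0,1\}$.
   Context: A hyperoperation $+:H\times H\to\mathcal{P}^*(H)$ is extended to subsets by $A+B=\bigcup_{a\in A,b\in B}(a+b)$. A (canonical) hypergroup is a nonempty set with a commutative associative hyperoperation, a unique $0$ with $0+x=\{x\}$, unique inverses $-x$ with $0\in x+(-x)$, and reversibility $x\in y+z\iff z\in x+(-y)$; $x-y:=x+(-y)$. A hyperring $(R,+,\cdot,0,1)$ is a hypergroup $(R,+,0)$ with a commutative monoid $(R,\cdot,1)$ such that $x(y+z)=xy+xz$, $0x=0$, $0\neq1$. A hyperideal is a nonempty $I\subseteq R$ with $a-rb\subseteq I$ for $a,b\in I$, $r\in R$; it is prime if $I\neq R$ and $xy\in I\Rightarrow x\in I$ or $y\in I$. $\operatorname{Spec}R$ is the set of prime hyperideals, with the Zariski topology whose closed sets are exactly the sets $V(I)=\{\mathfrak{p}\in\operatorname{Spec}R\mid I\subseteq\mathfrak{p}\}$ for hyperideals $I$. *)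

Set Implicit Arguments.

(* A (canonical) hyperring.  [hadd x y z] means  z ∈ x + y. *)
Record hyperring := HyperRing {
  car :> Type;
  hadd : car -> car -> car -> Prop;
  hzero : car;
  hneg : car -> car;
  hmul : car -> car -> car;
  hone : car;
  hadd_nonempty : forall x y, exists z, hadd x y z;
  hadd_comm : forall x y z, hadd x y z <-> hadd y x z;
  hadd_assoc : forall x y z w,
      (exists u, hadd x y u /\ hadd u z w) <-> (exists v, hadd y z v /\ hadd x v w);
  hadd_zero : forall x z, hadd hzero x z <-> z = x;
  hzero_unique : forall o, (forall x z, hadd o x z <-> z = x) -> o = hzero;
  hneg_inv : forall x, hadd x (hneg x) hzero;
  hneg_unique : forall x y, hadd x y hzero -> y = hneg x;
  hadd_rev : forall x y z, hadd y z x <-> hadd x (hneg y) z;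
  hmul_comm : forall x y, hmul x y = hmul y x;
  hmul_assoc : forall x y z, hmul x (hmul y z) = hmul (hmul x y) z;
  hmul_one : forall x, hmul hone x = x;
  hmul_distr : forall x y z w,
      (exists u, hadd y z u /\ w = hmul x u) <-> hadd (hmul x y) (hmul x z) w;
  hmul_zero : forall x, hmul hzero x = hzero;
  hzero_neq_one : hzero <> hone
}.

Section Spec.
Variable R : hyperring.

Definition hyperideal (I : R -> Prop) : Prop :=
  (exists a, I a) /\
  forall a b r c, I a -> I b -> hadd R a (hneg R (hmul R r b)) c -> I c.

Definition prime_hyperideal (P : R -> Prop) : Prop :=
  hyperideal P /\ (exists x, ~ P x) /\
  forall x y, P (hmul R x y) -> P x \/ P y.

(* Subsets of Spec R are predicates on prime hyperideals (only their values at
   prime hyperideals matter).  V(I) = {p ∈ Spec R | I ⊆ p}. *)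
Definition V (I : R -> Prop) (p : R -> Prop) : Prop := forall x, I x -> p x.

Definition zariski_closed (C : (R -> Prop) -> Prop) : Prop :=
  exists I, hyperideal I /\
    forall p, prime_hyperideal p -> (C p <-> V I p).

Definition Spec_disconnected : Prop :=
  exists A B : (R -> Prop) -> Prop,
    zariski_closed A /\ zariski_closed B /\
    (exists p, prime_hyperideal p /\ A p) /\
    (exists p, prime_hyperideal p /\ B p) /\
    (forall p, prime_hyperideal p -> ~ (A p /\ B p)) /\
    (forall p, prime_hyperideal p -> A p \/ B p).

End Spec.

From mathcomp Require Import ssreflect ssrfun ssrbool ssrnat boolp classical_sets.

(* If Spec R = V(I) ⊔ V(J), no prime contains I + J, so 1 ∈ a + b with a ∈ I,
   b ∈ J; moreover ab lies in every prime, hence is nilpotent: (ab)^n = 0.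
   No prime contains both a^n and b^n, so 1 ∈ r a^n + s b^n, and the summands
   are orthogonal, so e := r a^n is idempotent; e is neither 0 nor 1 because
   V(I) and V(J) are nonempty.  Conversely, an idempotent e ∉ {0, 1} has an
   orthogonal complement u with 1 ∈ e + u, and Spec R = V(e) ⊔ V(u).  The
   existence of primes is Krull's argument: by Zorn, an ideal maximal among
   those avoiding a multiplicative set is prime. *)

Local Open Scope classical_set_scope.

Section Hyperring.
Variable R : hyperring.

Local Notation "x ⋅ y" := (hmul R x y) (at level 40, left associativity).
Local Notation hadd := (hadd R).
Local Notation hneg := (hneg R).
Local Notation hyperideal := (hyperideal R).
Local Notation prime := (prime_hyperideal R).

Lemma hnegK (x : R) : hneg (hneg x) = x.
Proof. by symmetry; apply: hneg_unique; apply/hadd_comm; exact: hneg_inv. Qed.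

Lemma hneg0 : hneg (hzero R) = hzero R.
Proof. by have /hadd_zero <- := hneg_inv R (hzero R). Qed.

Lemma hadd0 (x z : R) : hadd x (hzero R) z <-> z = x.
Proof. by rewrite hadd_comm; exact: hadd_zero. Qed.

Lemma hmul0 (x : R) : x ⋅ hzero R = hzero R.
Proof. by rewrite hmul_comm hmul_zero. Qed.

Lemma hmul1 (x : R) : x ⋅ hone R = x.
Proof. by rewrite hmul_comm hmul_one. Qed.

Lemma hmulACA (a b c d : R) : (a ⋅ b) ⋅ (c ⋅ d) = (a ⋅ c) ⋅ (b ⋅ d).
Proof.
by rewrite -!hmul_assoc; congr (a ⋅ _); rewrite !hmul_assoc (hmul_comm R b c).
Qed.

Lemma hadd_mull (x : R) {y z u : R} : hadd y z u -> hadd (x ⋅ y) (x ⋅ z) (x ⋅ u).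
Proof. by move=> yzu; apply/hmul_distr; exists u. Qed.

Lemma hmulN (r b : R) : r ⋅ hneg b = hneg (r ⋅ b).
Proof. by apply: hneg_unique; have := hadd_mull r (hneg_inv R b); rewrite hmul0. Qed.

Lemma hmulNl (r b : R) : hneg r ⋅ b = hneg (r ⋅ b).
Proof. by rewrite hmul_comm hmulN hmul_comm. Qed.

Lemma haddACA {x y z w u v c : R} :
  hadd x y u -> hadd z w v -> hadd u v c ->
  exists u' v', hadd x z u' /\ hadd y w v' /\ hadd u' v' c.
Proof.
move=> xyu zwv uvc.
have [t [yvt xtc]] : exists t, hadd y v t /\ hadd x t c by apply/hadd_assoc; exists u.
have [v' [ywv' v'zt]] : exists v', hadd y w v' /\ hadd v' z t.
  by apply/hadd_assoc; exists v; split=> //; apply/hadd_comm.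
have [u' [xzu' u'v'c]] : exists u', hadd x z u' /\ hadd u' v' c.
  by apply/hadd_assoc; exists t; split=> //; apply/hadd_comm.
by exists u', v'.
Qed.

Fixpoint hpow (x : R) (n : nat) : R :=
  if n is n'.+1 then x ⋅ hpow x n' else hone R.

Lemma hpowD (x : R) m n : hpow x (m + n) = hpow x m ⋅ hpow x n.
Proof. by elim: m => [|m IHm] /=; rewrite ?hmul_one // IHm hmul_assoc. Qed.

Lemma hpowMn (a b : R) n : hpow (a ⋅ b) n = hpow a n ⋅ hpow b n.
Proof. by elim: n => [|n IHn] /=; rewrite ?hmul_one // IHn hmulACA. Qed.

Section Hyperideal.
Context {I : R -> Prop} (idealI : hyperideal I).

Lemma hyperideal0 : I (hzero R).
Proof.
have [[a Ia] closedI] := idealI.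
by apply: (closedI a a (hone R)) => //; rewrite hmul_one; exact: hneg_inv.
Qed.

Lemma hyperidealN b : I b -> I (hneg b).
Proof.
move=> Ib; apply: (idealI.2 _ b (hone R) _ hyperideal0) => //.
by rewrite hmul_one; apply/hadd_zero.
Qed.

Lemma hyperidealM r b : I b -> I (r ⋅ b).
Proof.
move=> Ib; rewrite -(hnegK (r ⋅ b)); apply: hyperidealN.
by apply: (idealI.2 _ b r _ hyperideal0) => //; exact/hadd_zero.
Qed.

Lemma hyperidealD {a b c} : I a -> I b -> hadd a b c -> I c.
Proof.
move=> Ia Ib abc; apply: (idealI.2 a (hneg b) (hone R)) => //.
  exact: hyperidealN.
by rewrite hmul_one hnegK.
Qed.

Lemma hyperideal_hpow x n : I x -> I (hpow x n.+1).
Proof. by move=> Ix /=; rewrite hmul_comm; exact: hyperidealM. Qed.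

End Hyperideal.

Lemma zero_hyperideal : hyperideal (fun c => c = hzero R).
Proof.
split; first by exists (hzero R).
by move=> _ _ r c -> ->; rewrite hmul0 hneg0 => /hadd_zero.
Qed.

Definition principal (x : R) : R -> Prop := fun c => exists r, c = r ⋅ x.

Lemma principal_hyperideal x : hyperideal (principal x).
Proof.
split; first by exists x, (hone R); rewrite hmul_one.
move=> _ _ r c [r1 ->] [r2 ->].
rewrite hmul_assoc -hmulNl (hmul_comm R r1 x) (hmul_comm R _ x).
by case/hmul_distr=> u [_ ->]; exists u; rewrite hmul_comm.
Qed.

Lemma principal_id x : principal x x.
Proof. by exists (hone R); rewrite hmul_one. Qed.

Definition ideal_sum (I J : R -> Prop) : R -> Prop :=
  fun c => exists a b, I a /\ J b /\ hadd a b c.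

Lemma ideal_sum_hyperideal {I J} :
  hyperideal I -> hyperideal J -> hyperideal (ideal_sum I J).
Proof.
move=> idealI idealJ; split.
  exists (hzero R), (hzero R), (hzero R).
  by split; [|split]; [exact: hyperideal0 | exact: hyperideal0 | exact/hadd_zero].
move=> c1 c2 r c [a1 [b1 [Ia1 [Jb1 ab1]]]] [a2 [b2 [Ia2 [Jb2 ab2]]]].
rewrite -hmulNl => c1c2c.
have [u [v [a12u [b12v uvc]]]] := haddACA ab1 (hadd_mull (hneg r) ab2) c1c2c.
exists u, v; split; last split=> //.
  by apply: (idealI.2 a1 a2 r) => //; rewrite -hmulNl.
by apply: (idealJ.2 b1 b2 r) => //; rewrite -hmulNl.
Qed.

Lemma ideal_sum_l I J a : hyperideal J -> I a -> ideal_sum I J a.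
Proof.
by move=> idealJ Ia; exists a, (hzero R); do 2?split=> //; [exact: hyperideal0 | exact/hadd0].
Qed.

Lemma ideal_sum_r I J b : hyperideal I -> J b -> ideal_sum I J b.
Proof.
by move=> idealI Jb; exists (hzero R), b; do 2?split=> //; [exact: hyperideal0 | exact/hadd_zero].
Qed.

Lemma prime_neq1 {P} : prime P -> ~ P (hone R).
Proof. by move=> [idealP [[x Px'] _]] P1; apply: Px'; rewrite -(hmul1 x); exact: hyperidealM. Qed.

Lemma prime_hpow P x n : prime P -> P (hpow x n) -> P x.
Proof.
move=> primeP; elim: n => [|n IHn] /= Pxn; first by case: (prime_neq1 primeP Pxn).
by case: (primeP.2.2 _ _ Pxn) => // /IHn.
Qed.

Lemma V_principal {P x} : hyperideal P -> V R (principal x) P <-> P x.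
Proof.
move=> idealP; split; first by apply; exact: principal_id.
by move=> Px _ [r ->]; exact: hyperidealM.
Qed.

Definition multiplicative (S : R -> Prop) : Prop :=
  S (hone R) /\ forall s t, S s -> S t -> S (s ⋅ t).

Definition avoiding_ideal (S I0 X : R -> Prop) : Prop :=
  hyperideal X /\ I0 `<=` X /\ forall x, S x -> ~ X x.

Lemma exists_maximal_avoiding_ideal {S I0} : avoiding_ideal S I0 I0 ->
  exists P, avoiding_ideal S I0 P /\
    forall Q, avoiding_ideal S I0 Q -> P `<=` Q -> Q `<=` P.
Proof.
move=> avoidI0.
(* The union of the empty chain is set0, which Zorn_bigcup must also accept. *)
pose Pz X := X = set0 \/ avoiding_ideal S I0 X.
have inhabited_avoiding X x : Pz X -> X x -> avoiding_ideal S I0 X.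
  by case=> [-> //|].
have [A [PzA Amax]] : exists A, Pz A /\ forall B, A `<` B -> ~ Pz B.
  apply: Zorn_bigcup => F FPz Ftot.
  have [[y [X0 FX0 X0y]] | Fempty] := pselect (exists y, (\bigcup_(X in F) X) y);
    last by left; apply/seteqP; split=> // y Fy; apply: Fempty; exists y.
  have avoidF X x : F X -> X x -> avoiding_ideal S I0 X.
    by move=> FX; apply: inhabited_avoiding; exact: FPz.
  right; split; [split|split].
  - by exists y, X0.
  - move=> a b r c [Xa FXa Xaa] [Xb FXb Xbb] abc.
    have [XaXb|XbXa] := Ftot _ _ FXa FXb.
    + by exists Xb => //; apply: ((avoidF _ _ FXb Xbb).1.2 a b r) => //; exact: XaXb.
    + by exists Xa => //; apply: ((avoidF _ _ FXa Xaa).1.2 a b r) => //; exact: XbXa.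
  - by move=> x /(avoidF _ _ FX0 X0y).2.1 ?; exists X0.
  - by move=> x Sx [X FX Xx]; exact: (avoidF _ _ FX Xx).2.2 x Sx Xx.
have avoidA : avoiding_ideal S I0 A.
  case: PzA => // A0; exfalso; apply: (Amax I0); last by right.
  rewrite A0; split=> // I0sub0.
  by have := I0sub0 _ (hyperideal0 avoidI0.1).
exists A; split=> // Q avoidQ AQ x Qx; apply: contrapT => Ax'.
apply: (Amax Q); last by right.
by split=> // QA; exact: Ax' (QA _ Qx).
Qed.

Lemma maximal_avoiding_ideal_prime S I0 P :
  multiplicative S -> avoiding_ideal S I0 P ->
  (forall Q, avoiding_ideal S I0 Q -> P `<=` Q -> Q `<=` P) -> prime P.
Proof.
move=> [S1 SM] [idealP [I0P SP]] maxP.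
split=> //; split; first by exists (hone R); exact: SP.
have escape z : ~ P z -> exists s p r, S s /\ P p /\ hadd p (r ⋅ z) s.
  move=> Pz'; apply: contrapT => noescape; apply: Pz'.
  have idealPz := ideal_sum_hyperideal idealP (principal_hyperideal z).
  apply: (maxP (ideal_sum P (principal z))).
  - split=> //; split=> [x /I0P|s Ss [p [_ [Pp [[r ->] pzs]]]]].
      by apply: ideal_sum_l; exact: principal_hyperideal.
    by apply: noescape; exists s, p, r.
  - by move=> x Px; apply: ideal_sum_l => //; exact: principal_hyperideal.
  - by apply: ideal_sum_r => //; exact: principal_id.
move=> x y Pxy; apply: contrapT => /not_orP [Px' Py'].
have [s1 [p1 [r1 [Ss1 [Pp1 ps1]]]]] := escape _ Px'.
have [s2 [p2 [r2 [Ss2 [Pp2 ps2]]]]] := escape _ Py'.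
(* s1 s2 ∈ s1 p2 + r2 y (p1 + r1 x), a sum of elements of P since x y ∈ P *)
apply: (SP (s1 ⋅ s2)); first exact: SM.
apply: (hyperidealD idealP _ _ (hadd_mull s1 ps2)); first exact: hyperidealM.
rewrite hmul_comm.
apply: (hyperidealD idealP _ _ (hadd_mull (r2 ⋅ y) ps1)); first exact: hyperidealM.
by rewrite hmulACA (hmul_comm R y x); exact: hyperidealM.
Qed.

Lemma exists_prime_avoiding {S I0} :
  multiplicative S -> hyperideal I0 -> (forall x, S x -> ~ I0 x) ->
  exists P, prime P /\ I0 `<=` P /\ forall x, S x -> ~ P x.
Proof.
move=> multS idealI0 SI0.
have avoidI0 : avoiding_ideal S I0 I0 by split=> //; split.
have [P [avoidP maxP]] := exists_maximal_avoiding_ideal avoidI0.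
exists P; split; last exact: avoidP.2.
exact: maximal_avoiding_ideal_prime multS avoidP maxP.
Qed.

Lemma exists_prime_above {I} :
  hyperideal I -> ~ I (hone R) -> exists P, prime P /\ I `<=` P.
Proof.
move=> idealI I1'.
have multS : multiplicative (fun s => s = hone R).
  by split=> // s t -> ->; rewrite hmul_one.
have [_ -> //|P [primeP [IP _]]] := exists_prime_avoiding multS idealI.
by exists P.
Qed.

Lemma nilpotent_of_mem_primes x :
  (forall P, prime P -> P x) -> exists n, hpow x n.+1 = hzero R.
Proof.
move=> primesx; apply: contrapT => nilpotent'.
pose S s := exists n, s = hpow x n.
have multS : multiplicative S.
  by split=> [|_ _ [m ->] [n ->]]; [exists 0 | exists (m + n); rewrite hpowD].
have S0' s : S s -> ~ s = hzero R.
  case=> [[|n] ->]; first exact: nesym (hzero_neq_one R).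
  by move=> xn0; apply: nilpotent'; exists n.
have [P [primeP [_ SP]]] := exists_prime_avoiding multS zero_hyperideal S0'.
by apply: (SP x); [exists 1; rewrite /= hmul1 | exact: primesx].
Qed.

Definition comaximal (I J : R -> Prop) : Prop := ideal_sum I J (hone R).

Lemma comaximal_of_no_common_prime I J :
  hyperideal I -> hyperideal J ->
  (forall P, prime P -> I `<=` P -> J `<=` P -> False) -> comaximal I J.
Proof.
move=> idealI idealJ noP; apply: contrapT => IJ1'.
have [P [primeP IJP]] := exists_prime_above (ideal_sum_hyperideal idealI idealJ) IJ1'.
by apply: (noP P primeP) => x Px; apply: IJP; [exact: ideal_sum_l | exact: ideal_sum_r].
Qed.

Lemma comaximal_hpow {a b} n :
  hadd a b (hone R) -> comaximal (principal (hpow a n)) (principal (hpow b n)).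
Proof.
move=> ab1; apply: comaximal_of_no_common_prime; try exact: principal_hyperideal.
move=> P primeP /(V_principal primeP.1) Pan /(V_principal primeP.1) Pbn.
apply: (prime_neq1 primeP); apply: (hyperidealD primeP.1 _ _ ab1).
- exact: prime_hpow primeP Pan.
- exact: prime_hpow primeP Pbn.
Qed.

Lemma idempotent_of_orthogonal {x y} :
  hadd x y (hone R) -> x ⋅ y = hzero R -> x ⋅ x = x.
Proof. by move=> xy1 xy0; have := hadd_mull x xy1; rewrite xy0 hmul1 => /hadd0/esym. Qed.

Lemma idempotent_complement {e} :
  e ⋅ e = e -> exists u, hadd e u (hone R) /\ e ⋅ u = hzero R.
Proof.
move=> ee; have : hadd (e ⋅ hone R) (e ⋅ hneg e) (hzero R).
  by rewrite hmul1 hmulN ee; exact: hneg_inv.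
by case/hmul_distr=> u [/(hadd_rev R _ e) eu1 /esym eu0]; exists u.
Qed.

Lemma principal_unit_idempotent {e} : e ⋅ e = e -> principal e (hone R) -> e = hone R.
Proof.
move=> ee [r r1]; have := congr1 (hmul R ^~ e) r1.
by rewrite /= hmul_one -hmul_assoc ee -r1.
Qed.

Lemma principal_unit_orthogonal {e u} :
  e ⋅ u = hzero R -> principal u (hone R) -> e = hzero R.
Proof.
move=> eu0 [r r1].
by rewrite -(hmul1 e) r1 hmul_assoc (hmul_comm R e r) -hmul_assoc eu0 hmul0.
Qed.

Lemma Spec_disconnected_of_idempotent e :
  e ⋅ e = e -> e <> hzero R -> e <> hone R -> Spec_disconnected R.
Proof.
move=> ee e0' e1'; have [u [eu1 eu0]] := idempotent_complement ee.
have closedV x : zariski_closed R (V R (principal x)).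
  by exists (principal x); split=> //; exact: principal_hyperideal.
have nonemptyV x : ~ principal x (hone R) -> exists P, prime P /\ V R (principal x) P.
  exact: exists_prime_above (principal_hyperideal x).
exists (V R (principal e)), (V R (principal u)).
split; first exact: closedV.
split; first exact: closedV.
split; first by apply: nonemptyV => /(principal_unit_idempotent ee).
split; first by apply: nonemptyV => /(principal_unit_orthogonal eu0).
split=> P primeP; rewrite !V_principal; try exact: primeP.1.
- by case=> Pe Pu; apply: (prime_neq1 primeP); exact: (hyperidealD primeP.1 Pe Pu eu1).
- by apply: primeP.2.2; rewrite eu0; exact: hyperideal0 primeP.1.
Qed.

Lemma idempotent_of_Spec_disconnected :
  Spec_disconnected R -> exists e, e ⋅ e = e /\ e <> hzero R /\ e <> hone R.
Proof.
move=> [A [B [[I [idealI AI]] [[J [idealJ BJ]]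
  [[pA [primeA ApA]] [[pB [primeB BpB]] [disjAB coverAB]]]]]]].
have [a [b [Ia [Jb ab1]]]] : comaximal I J.
  apply: comaximal_of_no_common_prime => // P primeP IP JP.
  by apply: (disjAB P primeP); split; [apply/AI | apply/BJ].
have [n abn0] : exists n, hpow (a ⋅ b) n.+1 = hzero R.
  apply: nilpotent_of_mem_primes => P primeP.
  case: (coverAB P primeP) => [/(AI P primeP) IP | /(BJ P primeP) JP].
  - by rewrite hmul_comm; exact: hyperidealM primeP.1 _ _ (IP _ Ia).
  - exact: hyperidealM primeP.1 _ _ (JP _ Jb).
have [_ [_ [[r ->] [[s ->] ef1]]]] := comaximal_hpow n.+1 ab1.
have ef0 : (r ⋅ hpow a n.+1) ⋅ (s ⋅ hpow b n.+1) = hzero R.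
  by rewrite hmulACA -hpowMn abn0 hmul0.
exists (r ⋅ hpow a n.+1); split; first exact: idempotent_of_orthogonal ef1 ef0.
split=> [e0 | e1].
- apply: (prime_neq1 primeB); move: ef1; rewrite e0 => /hadd_zero ->.
  apply: (hyperidealM primeB.1); apply: (hyperideal_hpow primeB.1).
  exact: (proj1 (BJ pB primeB) BpB).
- apply: (prime_neq1 primeA); rewrite -e1.
  apply: (hyperidealM primeA.1); apply: (hyperideal_hpow primeA.1).
  exact: (proj1 (AI pA primeA) ApA).
Qed.

End Hyperring.

Theorem proposition3p22 (R : hyperring) :
  Spec_disconnected R <->
  exists e : R, hmul R e e = e /\ e <> hzero R /\ e <> hone R.
Proof.
split; first exact: idempotent_of_Spec_disconnected.
by case=> e [ee [e0 e1]]; exact: Spec_disconnected_of_idempotent ee e0 e1.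
Qed.
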